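(* For each fixed $h$, the function $n\mapsto M(n,h)=\frac{n+2-p_{min}(n+h)}{3}$ is non-decreasing in $n$.
   Context: A polyiamond is a planar shape formed by gluing together finitely many congruent (closed) equilateral triangles (tiles) of the regular triangular lattice along their edges: any two tiles that intersect meet in an entire edge, and the union has connected interior. The perimeter of a polyiamond is the number of lattice edges on its topological boundary, and $p_{min}(m)$ is the minimum perimeter over all polyiamonds with $m$ tiles. *)

From Stdlib Require Import ClassicalEpsilon.
From mathcomp Require Import all_boot all_order all_algebra.
Set Implicit Arguments. Unset Strict Implicit. Unset Printing Implicit Defensive.
Import Order.TTheory GRing.Theory Num.Theory.

(* In the skew basis
   e1 = (1,0), e2 = (1/2, sqrt 3/2), the tile (x, y, true) is the "up"
   triangle with vertices (x,y), (x+1,y), (x,y+1); the tile (x, y, false)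
   is the "down" triangle with vertices (x+1,y), (x,y+1), (x+1,y+1). *)
Definition tile := (int * int * bool)%type.

Definition nbrs (t : tile) : seq tile :=
  let: (x, y, up) := t in
  if up then [:: (x, y, false); (x - 1, y, false); (x, y - 1, false)]%R
  else [:: (x, y, true); (x + 1, y, true); (x, y + 1, true)]%R.

Definition adj (t u : tile) : bool := u \in nbrs t.

Definition polyiamond (P : seq tile) : Prop :=
  [/\ P != [::], uniq P &
      forall t u, t \in P -> u \in P ->
        exists p : seq tile, [/\ path adj t p, all (mem P) p & last t p = u]].

(* Perimeter: number of lattice edges on the boundary, i.e. edges of tiles of P
   whose other adjacent tile is not in P. *)
Definition perimeter (P : seq tile) : nat :=
  \sum_(t <- P) count (fun u => u \notin P) (nbrs t).

Definition is_pmin (m p : nat) : Prop :=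
  (exists P, [/\ polyiamond P, size P = m & perimeter P = p]) /\
  (forall P, polyiamond P -> size P = m -> p <= perimeter P).

(* p_min(m): the minimum perimeter over polyiamonds with m tiles
   (well defined for m >= 1). *)
Definition pmin (m : nat) : nat :=
  epsilon (inhabits 0%N) (fun p => is_pmin m p).

Definition M (n h : int) : rat :=
  
  let k : nat := absz (n + h)%R in
  ((((n + 2)%R)%:~R - (pmin k)%:R) / 3%:R)%R.

(* Let u be a tile of a polyiamond P that is rightmost for the order
   up (x,y) < down (x,y) < up (x+1,y), and let v be the next tile to the right
   of u in its row.  Then v is outside P and shares an edge with u, so v :: P
   is a polyiamond with one more tile whose perimeter grows by at most one:
   v contributes at most two boundary edges and the edge uv stops being one.
   Hence p_min(m+1) <= p_min(m) + 1, which is exactly M(n,h) <= M(n+1,h). *)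

From mathcomp Require Import all_boot all_order all_algebra.
From Stdlib Require Import ClassicalEpsilon Wf_nat.
From mathcomp Require Import lra zify.
Set Implicit Arguments. Unset Strict Implicit. Unset Printing Implicit Defensive.
Import Order.TTheory GRing.Theory Num.Theory.
Local Open Scope ring_scope.

Lemma count_lt_sub (T : eqType) (a b : pred T) (s : seq T) x :
  subpred a b -> x \in s -> b x -> ~~ a x -> (count a s < count b s)%N.
Proof.
move=> sub_ab sx bx nax.
have -> : count b s = (count a s + count (predI b (predC a)) s)%N.
  rewrite -count_predUI (eq_count (a1 := predI _ _) (a2 := pred0)) ?count_pred0 ?addn0.
    by apply: eq_count => y /=; case: (boolP (a y)) => [/sub_ab ->|_]; rewrite ?andbT.
  by move=> y /=; case: (a y); rewrite ?andbF.
by rewrite -ltn_subLR ?subnn // -has_count; apply/hasP; exists x => //=; rewrite bx.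
Qed.

Lemma exists_argmax (T : eqType) d (R : orderType d) (f : T -> R) (s : seq T) :
  s != [::] -> exists2 u, u \in s & forall w, w \in s -> (f w <= f u)%O.
Proof.
elim: s => [//|a [|b s] IHs] _.
  by exists a => [|w]; rewrite ?mem_head // inE => /eqP ->.
have [u us max_u] := IHs isT.
case: (leP (f a) (f u)) => [le_au|lt_ua].
  by exists u => [|w]; rewrite inE ?us ?orbT // => /orP [/eqP ->|/max_u].
exists a => [|w]; first exact: mem_head.
by rewrite inE => /orP [/eqP ->//|/max_u/le_trans]; apply; apply: ltW.
Qed.

Lemma adj_sym (t u : tile) : adj t u = adj u t.
Proof.
case: t u => [[x y] []] [[x' y'] []]; rewrite /adj /= !inE //= !xpair_eqE /=.
all: by apply/idP/idP; lia.
Qed.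

Lemma size_nbrs (t : tile) : size (nbrs t) = 3%N.
Proof. by case: t => [[x y] []]. Qed.

Definition tile_key (t : tile) : int := let: (x, _, up) := t in 2 * x + (~~ up)%:R.

Definition next_tile (t : tile) : tile :=
  let: (x, y, up) := t in if up then (x, y, false) else (x + 1, y, true).

Lemma tile_key_next (t : tile) : tile_key (next_tile t) = tile_key t + 1.
Proof. by case: t => [[x y] []] /=; lia. Qed.

Lemma adj_next (t : tile) : adj t (next_tile t).
Proof. by case: t => [[x y] []]; rewrite /adj /= !inE eqxx ?orbT. Qed.

Lemma next_notin (P : seq tile) (u : tile) :
  (forall w, w \in P -> tile_key w <= tile_key u) -> next_tile u \notin P.
Proof. by move=> max_u; apply/negP => /max_u; rewrite tile_key_next; lia. Qed.

Lemma polyiamond_cons (P : seq tile) (u v : tile) :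
  polyiamond P -> u \in P -> adj u v -> v \notin P -> polyiamond (v :: P).
Proof.
case=> _ uniqP connP uP uv vP.
have allPv p : all (mem P) p -> all (mem (v :: P)) p.
  by apply: sub_all => w /= wP; rewrite inE wP orbT.
split=> //; first by rewrite /= vP.
move=> t w; rewrite !inE => /predU1P [->|tP] /predU1P [->|wP].
- by exists [::].
- have [p [path_p all_p last_p]] := connP u w uP wP.
  exists (u :: p); split=> //=; first by rewrite adj_sym uv.
  by rewrite inE uP orbT allPv.
- have [p [path_p all_p last_p]] := connP t u tP uP.
  exists (rcons p v); rewrite rcons_path path_p last_p uv all_rcons last_rcons.
  by split; rewrite //= inE eqxx allPv.
- have [p [path_p all_p last_p]] := connP t w tP wP.
  by exists p; rewrite allPv.
Qed.

Lemma perimeter_cons (P : seq tile) (u v : tile) :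
  u \in P -> adj u v -> v \notin P -> (perimeter (v :: P) <= (perimeter P).+1)%N.
Proof.
move=> uP uv vP; rewrite /perimeter big_cons !(big_rem u uP) /=.
have boundary_v : (count [predC v :: P] (nbrs v) <= 2)%N.
  rewrite -ltnS -(size_nbrs v) ltn_neqAle count_size andbT -all_count.
  have vu : adj v u by rewrite adj_sym.
  by apply/allP => /(_ u vu); rewrite /= inE uP orbT.
have boundary_u : (count [predC v :: P] (nbrs u) < count [predC P] (nbrs u))%N.
  apply: (count_lt_sub (x := v)) => //; last by rewrite /= mem_head.
  by move=> w /=; rewrite inE negb_or => /andP [].
have boundary_rest :
  (\sum_(w <- rem u P) count [predC v :: P] (nbrs w) <=
   \sum_(w <- rem u P) count [predC P] (nbrs w))%N.
  apply: leq_sum => w _; apply: sub_count => z /=.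
  by rewrite inE negb_or => /andP [].
have := leq_add boundary_v (leq_add boundary_u boundary_rest).
by rewrite addSn addnS add2n ltnS; apply.
Qed.

Lemma polyiamond_extend (P : seq tile) : polyiamond P ->
  exists v, polyiamond (v :: P) /\ (perimeter (v :: P) <= (perimeter P).+1)%N.
Proof.
move=> polyP; have [P_neq0 _ _] := polyP.
have [u uP max_u] := exists_argmax tile_key P_neq0.
have vP := next_notin max_u.
exists (next_tile u); split; first exact: polyiamond_cons (adj_next u) vP.
exact: perimeter_cons (adj_next u) vP.
Qed.

Lemma polyiamond1 (t : tile) : polyiamond [:: t].
Proof. by split=> // u w; rewrite !inE => /eqP -> /eqP ->; exists [::]. Qed.

Lemma exists_polyiamond (m : nat) : (0 < m)%N ->
  exists P, polyiamond P /\ size P = m.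
Proof.
elim: m => [//|[|m] IHm] _.
  by exists [:: (0, 0, true)]; split=> //; apply: polyiamond1.
have [P [polyP <-]] := IHm isT.
by have [v [polyPv _]] := polyiamond_extend polyP; exists (v :: P).
Qed.

Lemma pmin_spec (m : nat) : (0 < m)%N -> is_pmin m (pmin m).
Proof.
move=> m_gt0; apply: epsilon_spec.
have [P [polyP sizeP]] := exists_polyiamond m_gt0.
pose perimeter_of p := exists Q, [/\ polyiamond Q, size Q = m & perimeter Q = p].
have [|p [[exp min_p] _]] :=
  @dec_inh_nat_subset_has_unique_least_element perimeter_of (fun p => classic _).
  by exists (perimeter P), P.
by exists p; split=> // Q polyQ sizeQ; apply/ssrnat.leP/min_p; exists Q.
Qed.

Lemma pminS (m : nat) : (0 < m)%N -> (pmin m.+1 <= (pmin m).+1)%N.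
Proof.
move=> m_gt0; have [[P [polyP <- <-]] _] := pmin_spec m_gt0.
have [v [polyPv perimPv]] := polyiamond_extend polyP.
have [_ min_pmin] := pmin_spec (ltn0Sn (size P)).
exact: leq_trans (min_pmin _ polyPv erefl) perimPv.
Qed.

Theorem lemma3 (h n : int) : 0 < n + h -> M n h <= M (n + 1) h.
Proof.
move=> nh_gt0; have [k nh_k] : exists k : nat, n + h = k%:Z.
  by exists (absz (n + h)); rewrite gez0_abs ?ltW.
have k_gt0 : (0 < k)%N by rewrite -ltz_nat -nh_k.
have nh1_k : n + 1 + h = k.+1 by rewrite addrAC nh_k -addn1 PoszD.
rewrite /M nh_k nh1_k /=.
have : (pmin k.+1)%:R <= (pmin k)%:R + 1 :> rat by rewrite natr1 ler_nat pminS.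
rewrite !intrD; lra.
Qed.
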